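(* Let $\Omega\subseteq\mathbb{R}^n$ be open and let $f\in\mathbb{A}(\Omega)$. Then: (i) for every dense subset $D$ of $\Omega$ the function $F(D,\Omega,f)$ is S-continuous; (ii) the function $G(f)=[I(S(I(f))),S(I(S(f)))]$ is D-continuous; (iii) both functions $F(S(I(f)))$ and $F(I(S(f)))$ are H-continuous and $F(S(I(f)))\le F(I(S(f)))$.
   Context: $\overline{\mathbb{R}}=\mathbb{R}\cup\{\pm\infty\}$ and $\mathbb{I}\overline{\mathbb{R}}=\{[\underline a,\overline a]:\underline a,\overline a\in\overline{\mathbb{R}},\ \underline a\le\overline a\}$, with $a\in\overline{\mathbb{R}}$ identified with $[a,a]$; extended-real-valued functions are thus regarded as interval functions. $\mathbb{A}(\Omega)$ is the set of all functions $f:\Omega\to\mathbb{I}\overline{\mathbb{R}}$, written $f=[\underline f,\overline f]$. $B_\delta(x)=\{y\in\Omega:\|x-y\|<\delta\}$. For a dense subset $D\subseteq\Omega$ and $f\in\mathbb{A}(D)$ define $I(D,\Omega,f)(x)=\sup_{\delta>0}\inf\{z\in f(y):y\in B_\delta(x)\cap D\}$, $S(D,\Omega,f)(x)=\inf_{\delta>0}\sup\{z\in f(y):y\in B_\delta(x)\cap D\}$, and $F(D,\Omega,f)(x)=[I(D,\Omega,f)(x),S(D,\Omega,f)(x)]$; when $D=\Omega$ write $I(f),S(f),F(f)$ (for $f\in\mathbb{A}(\Omega)$, $F(D,\Omega,f)$ uses the restriction of $f$ to $D$). The order on intervals is $[\underline a,\overline a]\le[\underline b,\overline b]$ iff $\underline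 a\le\underline b$ and $\overline a\le\overline b$, and $f\le g$ means $f(x)\le g(x)$ for all $x\in\Omega$. A function $f\in\mathbb{A}(\Omega)$ is S-continuous if $F(f)=f$; D-continuous if $F(D,\Omega,f)=f$ for every dense subset $D$ of $\Omega$; H-continuous if for every $g\in\mathbb{A}(\Omega)$ with $g(x)\subseteq f(x)$ for all $x$ one has $F(g)=f$. *)

From HB Require Import structures.
From mathcomp Require Import all_boot all_order all_algebra.
From mathcomp Require Import all_classical all_reals all_analysis.
Set Implicit Arguments. Unset Strict Implicit. Unset Printing Implicit Defensive.
Import Order.TTheory GRing.Theory Num.Theory.
Local Open Scope classical_set_scope.
Local Open Scope ring_scope.

Section IntervalFunctions.
Variables (R : realType) (n : nat).

Definition pt := 'rV[R]_n.

Definition edist (x y : pt) : R :=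
  Num.sqrt (\sum_(i < n) (x ord0 i - y ord0 i) ^+ 2).

(* an element of II(Rbar) is a pair [lo, hi]; validity lo <= hi is imposed
   separately by [in_A] *)
Definition ival := (\bar R * \bar R)%type.

Definition degen (g : pt -> \bar R) : pt -> ival := fun x => (g x, g x).

Definition in_A (Om : set pt) (f : pt -> ival) : Prop :=
  forall x, Om x -> ((f x).1 <= (f x).2)%E.

Definition ball_in (Om : set pt) (x : pt) (d : R) : set pt :=
  [set y | Om y /\ edist x y < d].

Definition open_eucl (Om : set pt) : Prop :=
  forall x, Om x -> exists d : R, 0 < d /\ [set y | edist x y < d] `<=` Om.

Definition dense_in (D Om : set pt) : Prop :=
  D `<=` Om /\ forall x, Om x -> forall d : R, 0 < d -> ball_in Om x d `&` D !=set0.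

Definition vals (D Om : set pt) (f : pt -> ival) (x : pt) (d : R) : set (\bar R) :=
  [set z | exists y, (ball_in Om x d `&` D) y /\ ((f y).1 <= z)%E /\ (z <= (f y).2)%E].

Definition Ifun (D Om : set pt) (f : pt -> ival) : pt -> \bar R :=
  fun x => ereal_sup [set ereal_inf (vals D Om f x d) | d in [set d : R | 0 < d]].

Definition Sfun (D Om : set pt) (f : pt -> ival) : pt -> \bar R :=
  fun x => ereal_inf [set ereal_sup (vals D Om f x d) | d in [set d : R | 0 < d]].

Definition Ffun (D Om : set pt) (f : pt -> ival) : pt -> ival :=
  fun x => (Ifun D Om f x, Sfun D Om f x).

Definition eq_on (Om : set pt) (f g : pt -> ival) : Prop :=
  forall x, Om x -> f x = g x.

Definition le_on (Om : set pt) (f g : pt -> ival) : Prop :=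
  forall x, Om x -> ((f x).1 <= (g x).1)%E /\ ((f x).2 <= (g x).2)%E.

Definition S_continuous (Om : set pt) (f : pt -> ival) : Prop :=
  eq_on Om (Ffun Om Om f) f.

Definition D_continuous (Om : set pt) (f : pt -> ival) : Prop :=
  forall D, dense_in D Om -> eq_on Om (Ffun D Om f) f.

Definition H_continuous (Om : set pt) (f : pt -> ival) : Prop :=
  forall g, in_A Om g ->
    (forall x, Om x -> ((f x).1 <= (g x).1)%E /\ ((g x).2 <= (f x).2)%E) ->
    eq_on Om (Ffun Om Om g) f.

End IntervalFunctions.

(* On an interval function with valid values, I and S only see the lower and
   upper endpoint functions, of which they are the lower and upper Baire
   envelopes. On Omega these envelopes are monotone, satisfy I u <= u <= S u,
   and are idempotent, because a ball of radius d/2 centred at a point of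
   B(x, d/2) lies in B(x, d). Sampling only on a dense set D does not change
   the lower envelope of an upper semicontinuous function (a fixed point of
   S), and dually for upper envelopes. Together with the identities
   S (I (S (I u))) = S (I u) and I (S (I (S u))) = I (S u), all claims follow
   by monotonicity. *)

From Pilot Require Import Defs.
From HB Require Import structures.
From mathcomp Require Import all_boot all_order all_algebra.
From mathcomp Require Import all_classical all_reals all_analysis.
From mathcomp Require Import lra ring.
Set Implicit Arguments. Unset Strict Implicit.
Import Order.TTheory GRing.Theory Num.Theory.
Local Open Scope classical_set_scope.
Local Open Scope ring_scope.

Section EuclideanDistance.
Variables (R : realType) (n : nat).
Implicit Types (x y z : 'rV[R]_n) (d : R).

Lemma edist_xx x : Defs.edist x x = 0.
Proof.
rewrite /Defs.edist (eq_bigr (fun _ => 0)) ?big1 ?sqrtr0 // => i _.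
by rewrite subrr expr0n.
Qed.

Lemma edist_lt_sqr x y d : 0 < d ->
  (Defs.edist x y < d) = (\sum_(i < n) (x ord0 i - y ord0 i) ^+ 2 < d ^+ 2).
Proof.
by move=> d0; rewrite -[in RHS]ltr_sqrt ?exprn_gt0 // sqrtr_sqr gtr0_norm.
Qed.

(* Instead of Minkowski's inequality, (a - c)^2 <= 2 (a - b)^2 + 2 (b - c)^2
   suffices once both radii are halved. *)
Lemma edist_lt_half_trans x y z d : 0 < d ->
  Defs.edist x y < d / 2 -> Defs.edist y z < d / 2 -> Defs.edist x z < d.
Proof.
move=> d0; have d2 : 0 < d / 2 by rewrite divr_gt0.
rewrite !edist_lt_sqr // => xy yz.
have sum_le : \sum_(i < n) (x ord0 i - z ord0 i) ^+ 2 <=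
    2 * \sum_(i < n) (x ord0 i - y ord0 i) ^+ 2
  + 2 * \sum_(i < n) (y ord0 i - z ord0 i) ^+ 2.
  rewrite !mulr_sumr -big_split /=; apply: ler_sum => i _.
  have := sqr_ge0 (x ord0 i - y ord0 i - (y ord0 i - z ord0 i)); nra.
apply: (le_lt_trans sum_le).
have -> : d ^+ 2 = 2 * (d / 2) ^+ 2 + 2 * (d / 2) ^+ 2 by field.
by apply: ltrD; rewrite ltr_pM2l.
Qed.

End EuclideanDistance.

Section Envelopes.
Variables (R : realType) (n : nat) (Om : set 'rV[R]_n).
Implicit Types (x y : 'rV[R]_n) (D : set 'rV[R]_n) (u v w a b : 'rV[R]_n -> \bar R).
Local Open Scope ereal_scope.

Definition lower_env D u x :=
  ereal_sup [set ereal_inf [set u y | y in ball_in Om x d `&` D]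
            | d in [set d : R | (0 < d)%R]].

Definition upper_env D u x :=
  ereal_inf [set ereal_sup [set u y | y in ball_in Om x d `&` D]
            | d in [set d : R | (0 < d)%R]].

Lemma Ifun_lower_env D g : (forall y, Om y -> D y -> (g y).1 <= (g y).2) ->
  Ifun D Om g = lower_env D (fun y => (g y).1).
Proof.
move=> gOK; apply: funext => x; congr ereal_sup; apply: eq_imagel => d _.
apply/le_anti/andP; split.
- apply: le_ereal_inf_tmp => _ [y [[Omy xy] Dy] <-]; apply: ereal_inf_lbound.
  by exists y; split => //; split => //; apply: gOK.
- apply: le_ereal_inf_tmp => z [y [By [gz _]]]; apply: le_trans gz.
  by apply: ereal_inf_lbound; exists y.
Qed.

Lemma Sfun_upper_env D g : (forall y, Om y -> D y -> (g y).1 <= (g y).2) ->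
  Sfun D Om g = upper_env D (fun y => (g y).2).
Proof.
move=> gOK; apply: funext => x; congr ereal_inf; apply: eq_imagel => d _.
apply/le_anti/andP; split.
- apply: ge_ereal_sup => z [y [By [_ zg]]]; apply: le_trans zg _.
  by apply: ereal_sup_ubound; exists y.
- apply: ge_ereal_sup => _ [y [[Omy xy] Dy] <-]; apply: ereal_sup_ubound.
  by exists y; split => //; split => //; apply: gOK.
Qed.

Lemma Ifun_degen D u : Ifun D Om (degen u) = lower_env D u.
Proof. exact: Ifun_lower_env. Qed.

Lemma Sfun_degen D u : Sfun D Om (degen u) = upper_env D u.
Proof. exact: Sfun_upper_env. Qed.

Lemma Ffun_degen D u :
  Ffun D Om (degen u) = fun x => (lower_env D u x, upper_env D u x).
Proof. by rewrite /Ffun Ifun_degen Sfun_degen. Qed.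

Lemma lower_env_le D u x : Om x -> D x -> lower_env D u x <= u x.
Proof.
move=> Omx Dx; apply: ge_ereal_sup => _ [d d0 <-]; apply: ereal_inf_lbound.
by exists x => //; split => //; split => //; rewrite edist_xx.
Qed.

Lemma upper_env_ge D u x : Om x -> D x -> u x <= upper_env D u x.
Proof.
move=> Omx Dx; apply: le_ereal_inf_tmp => _ [d d0 <-]; apply: ereal_sup_ubound.
by exists x => //; split => //; split => //; rewrite edist_xx.
Qed.

Lemma le_lower_env D u v x : (forall y, Om y -> D y -> u y <= v y) ->
  lower_env D u x <= lower_env D v x.
Proof.
move=> uv; apply: ge_ereal_sup => _ [d d0 <-].
apply: (le_trans _ (ereal_sup_ubound _)); last by exists d.
apply: le_ereal_inf_tmp => _ [y [[Omy xy] Dy] <-]; apply: le_trans (uv y Omy Dy).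
by apply: ereal_inf_lbound; exists y.
Qed.

Lemma le_upper_env D u v x : (forall y, Om y -> D y -> u y <= v y) ->
  upper_env D u x <= upper_env D v x.
Proof.
move=> uv; apply: le_ereal_inf_tmp => _ [d d0 <-].
apply: (le_trans (ereal_inf_lbound _)); first by exists d.
apply: ge_ereal_sup => _ [y [[Omy xy] Dy] <-]; apply: le_trans (uv y Omy Dy) _.
by apply: ereal_sup_ubound; exists y.
Qed.

Lemma eq_lower_env D u v x : (forall y, Om y -> u y = v y) ->
  lower_env D u x = lower_env D v x.
Proof.
by move=> uv; apply/le_anti/andP; split; apply: le_lower_env => y Omy _;
  rewrite uv.
Qed.

Lemma eq_upper_env D u v x : (forall y, Om y -> u y = v y) ->
  upper_env D u x = upper_env D v x.
Proof.
by move=> uv; apply/le_anti/andP; split; apply: le_upper_env => y Omy _;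
  rewrite uv.
Qed.

Lemma lower_env_subset D u x : D `<=` Om -> lower_env Om u x <= lower_env D u x.
Proof.
move=> DOm; apply: ge_ereal_sup => _ [d d0 <-].
apply: (le_trans _ (ereal_sup_ubound _)); last by exists d.
apply: ereal_inf_le_tmp => _ [y [xy Dy] <-].
by exists y => //; split => //; exact: DOm.
Qed.

Lemma upper_env_subset D u x : D `<=` Om -> upper_env D u x <= upper_env Om u x.
Proof.
move=> DOm; apply: le_ereal_inf_tmp => _ [d d0 <-].
apply: (le_trans (ereal_inf_lbound _)); first by exists d.
apply: ereal_sup_le => _ [y [xy Dy] <-].
by exists y => //; split => //; exact: DOm.
Qed.

Lemma lower_env_idem D u x : Om x -> lower_env Om (lower_env D u) x = lower_env D u x.
Proof.
move=> Omx; apply/le_anti/andP; split; first exact: lower_env_le.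
apply: ge_ereal_sup => _ [d d0 <-]; have d2 : (0 < d / 2)%R by rewrite divr_gt0.
apply: (le_trans _ (ereal_sup_ubound _)); last by exists (d / 2)%R.
apply: le_ereal_inf_tmp => _ [y [[Omy xy] _] <-].
apply: (le_trans _ (ereal_sup_ubound _)); last by exists (d / 2)%R.
apply: ereal_inf_le_tmp => _ [z [[Omz yz] Dz] <-]; exists z => //.
by split => //; split => //; exact: edist_lt_half_trans xy yz.
Qed.

Lemma upper_env_idem D u x : Om x -> upper_env Om (upper_env D u) x = upper_env D u x.
Proof.
move=> Omx; apply/le_anti/andP; split; last exact: upper_env_ge.
apply: le_ereal_inf_tmp => _ [d d0 <-]; have d2 : (0 < d / 2)%R by rewrite divr_gt0.
apply: (le_trans (ereal_inf_lbound _)); first by exists (d / 2)%R.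
apply: ge_ereal_sup => _ [y [[Omy xy] _] <-].
apply: (le_trans (ereal_inf_lbound _)); first by exists (d / 2)%R.
apply: ereal_sup_le => _ [z [[Omz yz] Dz] <-]; exists z => //.
by split => //; split => //; exact: edist_lt_half_trans xy yz.
Qed.

Lemma lower_env_le_upper_env D u w x : dense_in D Om -> Om x ->
  (forall y, Om y -> D y -> u y <= w y) -> lower_env D u x <= upper_env D w x.
Proof.
move=> [_ denseD] Omx uw; apply: ge_ereal_sup => _ [d d0 <-].
apply: le_ereal_inf_tmp => _ [d' d'0 <-].
have [z [[Omz]]] : ball_in Om x (Num.min d d')%R `&` D !=set0.
  by apply: denseD; rewrite // lt_min d0 d'0.
rewrite lt_min => /andP[xzd xzd'] Dz.
apply: (@le_trans _ _ (u z)); first by apply: ereal_inf_lbound; exists z.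
by apply: le_trans (uw z Omz Dz) _; apply: ereal_sup_ubound; exists z.
Qed.

(* If v y were below the infimum of v over D near x, upper semicontinuity would
   keep v below it on a small ball around y, and that ball meets D. *)
Lemma lower_env_dense_le D v x : dense_in D Om ->
  (forall y, Om y -> upper_env Om v y <= v y) -> lower_env D v x <= lower_env Om v x.
Proof.
move=> [_ denseD] usc_v; apply: ge_ereal_sup => _ [d d0 <-].
have d2 : (0 < d / 2)%R by rewrite divr_gt0.
apply: (le_trans _ (ereal_sup_ubound _)); last by exists (d / 2)%R.
apply: le_ereal_inf_tmp => _ [y [[Omy xy] _] <-].
rewrite leNgt; apply/negP => /(le_lt_trans (usc_v y Omy)).
move=> /ereal_inf_lt [_ [d' d'0 <-] sup_lt].
have [z [[Omz]]] : ball_in Om y (Num.min d' (d / 2))%R `&` D !=set0.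
  by apply: denseD; rewrite // lt_min d'0 d2.
rewrite lt_min => /andP[yzd' yzd] Dz.
have : v z < ereal_inf [set v y | y in ball_in Om x d `&` D].
  by apply: le_lt_trans sup_lt; apply: ereal_sup_ubound; exists z.
rewrite ltNge => /negP; apply; apply: ereal_inf_lbound; exists z => //.
by split => //; split => //; exact: edist_lt_half_trans xy yzd.
Qed.

Lemma upper_env_dense_ge D w x : dense_in D Om ->
  (forall y, Om y -> w y <= lower_env Om w y) -> upper_env Om w x <= upper_env D w x.
Proof.
move=> [_ denseD] lsc_w; apply: le_ereal_inf_tmp => _ [d d0 <-].
have d2 : (0 < d / 2)%R by rewrite divr_gt0.
apply: (le_trans (ereal_inf_lbound _)); first by exists (d / 2)%R.
apply: ge_ereal_sup => _ [y [[Omy xy] _] <-].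
rewrite leNgt; apply/negP => /lt_le_trans /(_ (lsc_w y Omy)).
move=> /ereal_sup_gt [_ [d' d'0 <-] lt_inf].
have [z [[Omz]]] : ball_in Om y (Num.min d' (d / 2))%R `&` D !=set0.
  by apply: denseD; rewrite // lt_min d'0 d2.
rewrite lt_min => /andP[yzd' yzd] Dz.
have : ereal_sup [set w y | y in ball_in Om x d `&` D] < w z.
  by apply: lt_le_trans lt_inf _; apply: ereal_inf_lbound; exists z.
rewrite ltNge => /negP; apply; apply: ereal_sup_ubound; exists z => //.
by split => //; split => //; exact: edist_lt_half_trans xy yzd.
Qed.

Lemma lower_env_dense_lower_env D v x : dense_in D Om -> Om x ->
  (forall y, Om y -> upper_env Om v y <= v y) ->
  lower_env D (lower_env Om v) x = lower_env Om v x.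
Proof.
move=> denseD Omx usc_v; apply/le_anti/andP; split.
  apply: (le_trans _ (lower_env_dense_le x denseD usc_v)).
  by apply: le_lower_env => y Omy _; apply: lower_env_le.
by rewrite -{1}lower_env_idem //; apply: lower_env_subset; case: denseD.
Qed.

Lemma upper_env_dense_upper_env D w x : dense_in D Om -> Om x ->
  (forall y, Om y -> w y <= lower_env Om w y) ->
  upper_env D (upper_env Om w) x = upper_env Om w x.
Proof.
move=> denseD Omx lsc_w; apply/le_anti/andP; split.
  by rewrite -[leRHS]upper_env_idem //; apply: upper_env_subset; case: denseD.
apply: le_trans (upper_env_dense_ge x denseD lsc_w) _.
by apply: le_upper_env => y Omy _; apply: upper_env_ge.
Qed.

Lemma upper_lower_upper_lower u x : Om x ->
  upper_env Om (lower_env Om (upper_env Om (lower_env Om u))) x =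
  upper_env Om (lower_env Om u) x.
Proof.
move=> Omx; apply/le_anti/andP; split.
  rewrite -[leRHS]upper_env_idem //.
  by apply: le_upper_env => y Omy _; apply: lower_env_le.
apply: le_upper_env => y Omy _; rewrite -lower_env_idem //.
by apply: le_lower_env => z Omz _; apply: upper_env_ge.
Qed.

Lemma lower_upper_lower_upper u x : Om x ->
  lower_env Om (upper_env Om (lower_env Om (upper_env Om u))) x =
  lower_env Om (upper_env Om u) x.
Proof.
move=> Omx; apply/le_anti/andP; split.
  apply: le_lower_env => y Omy _; rewrite -[leRHS]upper_env_idem //.
  by apply: le_upper_env => z Omz _; apply: lower_env_le.
rewrite -[leLHS]lower_env_idem //.
by apply: le_lower_env => y Omy _; apply: upper_env_ge.
Qed.

Lemma upper_lower_le_upper_lower_upper u w x : (forall y, Om y -> u y <= w y) ->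
  upper_env Om (lower_env Om u) x <= upper_env Om (lower_env Om (upper_env Om w)) x.
Proof.
move=> uw; apply: le_upper_env => y Omy _; apply: le_lower_env => z Omz _.
exact: le_trans (uw z Omz) (upper_env_ge _ Omz Omz).
Qed.

Lemma Ffun_env D g : (forall y, Om y -> D y -> (g y).1 <= (g y).2) ->
  Ffun D Om g =
  fun x => (lower_env D (fun y => (g y).1) x, upper_env D (fun y => (g y).2) x).
Proof. by move=> gOK; rewrite /Ffun Ifun_lower_env // Sfun_upper_env. Qed.

Lemma S_continuous_Ffun D f : dense_in D Om -> in_A Om f ->
  S_continuous Om (Ffun D Om f).
Proof.
move=> denseD fOK.
rewrite /S_continuous [Ffun D Om f]Ffun_env => [|y Omy _]; last exact: fOK.
rewrite Ffun_env => [x Omx /=|y Omy _ /=].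
  by rewrite lower_env_idem // upper_env_idem.
by apply: lower_env_le_upper_env => // z Omz _; apply: fOK.
Qed.

Lemma D_continuous_lower_upper v w :
  (forall x, Om x -> upper_env Om v x <= v x) ->
  (forall x, Om x -> w x <= lower_env Om w x) ->
  (forall x, Om x -> lower_env Om v x <= upper_env Om w x) ->
  D_continuous Om (fun x => (lower_env Om v x, upper_env Om w x)).
Proof.
move=> usc_v lsc_w vw D denseD x Omx; rewrite Ffun_env => [/=|y Omy _ /=].
  by rewrite lower_env_dense_lower_env // upper_env_dense_upper_env.
exact: vw.
Qed.

Lemma H_continuous_pair a b :
  (forall x, Om x -> a x = lower_env Om b x) ->
  (forall x, Om x -> b x = upper_env Om a x) ->
  H_continuous Om (fun x => (a x, b x)).
Proof.
move=> aE bE g gOK between x Omx.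
have aK y : Om y -> lower_env Om a y = a y.
  by move=> Omy; rewrite aE // -[RHS]lower_env_idem //; apply: eq_lower_env.
have bK y : Om y -> upper_env Om b y = b y.
  by move=> Omy; rewrite bE // -[RHS]upper_env_idem //; apply: eq_upper_env.
rewrite Ffun_env => [/=|y Omy _]; last exact: gOK.
congr pair; apply/le_anti/andP; split.
- rewrite aE //; apply: le_lower_env => y Omy _.
  exact: le_trans (gOK y Omy) (between y Omy).2.
- by rewrite -aK //; apply: le_lower_env => y Omy _; exact: (between y Omy).1.
- by rewrite -bK //; apply: le_upper_env => y Omy _; exact: (between y Omy).2.
- rewrite bE //; apply: le_upper_env => y Omy _.
  exact: le_trans (between y Omy).1 (gOK y Omy).
Qed.

Lemma H_continuous_Ffun_upper_lower u :
  H_continuous Om (Ffun Om Om (degen (upper_env Om (lower_env Om u)))).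
Proof.
rewrite Ffun_degen; apply: H_continuous_pair => x Omx.
  by apply: eq_lower_env => y Omy; rewrite upper_env_idem.
by rewrite upper_env_idem // upper_lower_upper_lower.
Qed.

Lemma H_continuous_Ffun_lower_upper u :
  H_continuous Om (Ffun Om Om (degen (lower_env Om (upper_env Om u)))).
Proof.
rewrite Ffun_degen; apply: H_continuous_pair => x Omx.
  by rewrite lower_env_idem // lower_upper_lower_upper.
by apply: eq_upper_env => y Omy; rewrite lower_env_idem.
Qed.

Lemma le_on_Ffun_upper_lower u w : (forall x, Om x -> u x <= w x) ->
  le_on Om (Ffun Om Om (degen (upper_env Om (lower_env Om u))))
           (Ffun Om Om (degen (lower_env Om (upper_env Om w)))).
Proof.
move=> uw; rewrite !Ffun_degen => x Omx /=; split.
  rewrite lower_env_idem //; apply: le_lower_env => y Omy _.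
  apply: (@le_trans _ _ (upper_env Om u y)); apply: le_upper_env => z Omz _.
  - exact: lower_env_le.
  - exact: uw.
by rewrite upper_env_idem //; apply: upper_lower_le_upper_lower_upper.
Qed.

End Envelopes.

Unset Implicit Arguments. Set Strict Implicit.

Theorem theorem2 (R : realType) (n : nat) (Om : set 'rV[R]_n)
  (f : 'rV[R]_n -> (\bar R * \bar R)%type) :
  open_eucl Om -> in_A Om f ->
  (forall D : set 'rV[R]_n, dense_in D Om -> S_continuous Om (Ffun D Om f)) /\
  D_continuous Om
    (fun x => (Ifun Om Om (degen (Sfun Om Om (degen (Ifun Om Om f)))) x,
               Sfun Om Om (degen (Ifun Om Om (degen (Sfun Om Om f)))) x)) /\
  H_continuous Om (Ffun Om Om (degen (Sfun Om Om (degen (Ifun Om Om f))))) /\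
  H_continuous Om (Ffun Om Om (degen (Ifun Om Om (degen (Sfun Om Om f))))) /\
  le_on Om (Ffun Om Om (degen (Sfun Om Om (degen (Ifun Om Om f)))))
           (Ffun Om Om (degen (Ifun Om Om (degen (Sfun Om Om f))))).
Proof.
move=> _ fOK; have fOK' y (Omy : Om y) (_ : Om y) := fOK y Omy.
rewrite (Ifun_lower_env fOK') (Sfun_upper_env fOK') !Ifun_degen !Sfun_degen.
split; first by move=> D denseD; exact: S_continuous_Ffun.
split.
  apply: D_continuous_lower_upper => x Omx.
  - by rewrite upper_env_idem.
  - by rewrite lower_env_idem.
  - apply: le_trans (lower_env_le _ Omx Omx) _.
    exact: upper_lower_le_upper_lower_upper fOK.
split; first exact: H_continuous_Ffun_upper_lower.
split; first exact: H_continuous_Ffun_lower_upper.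
exact: le_on_Ffun_upper_lower.
Qed.
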